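(* Let $R$ be a commutative associative unital ring and $B$ a unital $R$-algebra with identity $1$. Assume $B=Rb_0\oplus\mathrm{ac}(B)$ for some $b_0\in B$ such that $Rb_0$ is free with basis $\{b_0\}$. Define $\pi\colon B\to R$ by $b=\pi(b)b_0+b_{\mathrm{ac}}$ with $b_{\mathrm{ac}}\in\mathrm{ac}(B)$, and $\beta_0\colon B\times B\to R$, $\beta_0(a,b)=\pi(ab)$. Then $\beta_0\in\mathrm{IBF}_R(B)$, $(B,\beta_0)$ satisfies the IBF-principle, and $\tilde\beta_0\colon\mathrm{AC}(B)\to R$, $\bar b\mapsto\beta_0(b,1)$, is a well-defined $R$-module isomorphism.
   Context: $\mathrm{ac}(B)=(B,B,B)+[B,B]$, where $(B,B,B)$ is the additive span of all associators $(ab)c-a(bc)$ and $[B,B]$ the additive span of all commutators $ab-ba$; $\mathrm{AC}(B)=B/\mathrm{ac}(B)$. $\mathrm{IBF}_R(B)$ is the $R$-module of $R$-bilinear forms $\beta\colon B\times B\to R$ with $\beta(ab,c)=\beta(a,bc)=\beta(b,ca)$. $\mathbf{IBF}_R(B)$ is the quotient of $B\otimes_R B$ by the $R$-span of all $ab\otimes c-a\otimes bc$ and $ab\otimes c-b\otimes ca$. $(B,\beta)$ satisfies the IBF-principle if $\beta\in\mathrm{IBF}_R(B)$ and the induced map $\mathbf{IBF}_R(B)\to R$, $\overline{a\otimes b}\mapsto\beta(a,b)$, is an $R$-module isomorphism. *)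

From HB Require Import structures.
From mathcomp Require Import all_boot all_order all_algebra.
From mathcomp.multinomials Require Import freeg.
Set Implicit Arguments. Unset Strict Implicit. Unset Printing Implicit Defensive.
Import Order.TTheory GRing.Theory Num.Theory.
Local Open Scope ring_scope.

Section NonAssoc.
Context (R : comNzRingType) (B : lmodType R) (mul : B -> B -> B) (one : B).

Definition unital_algebra : Prop :=
  [/\ forall (r : R) (a a' b : B), mul (r *: a + a') b = r *: mul a b + mul a' b,
      forall (r : R) (a b b' : B), mul a (r *: b + b') = r *: mul a b + mul a b',
      forall b, mul one b = b &
      forall b, mul b one = b].

Definition associator (a b c : B) : B := mul (mul a b) c - mul a (mul b c).
Definition commutator (a b : B) : B := mul a b - mul b a.

Inductive in_ac : B -> Prop :=
  | ac_associator a b c : in_ac (associator a b c)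
  | ac_commutator a b : in_ac (commutator a b)
  | ac_zero : in_ac 0
  | ac_add x y : in_ac x -> in_ac y -> in_ac (x + y)
  | ac_opp x : in_ac x -> in_ac (- x).

Definition is_IBF (beta : B -> B -> R) : Prop :=
  [/\ forall (r : R) (a a' b : B), beta (r *: a + a') b = r * beta a b + beta a' b,
      forall (r : R) (a b b' : B), beta a (r *: b + b') = r * beta a b + beta a b',
      forall a b c, beta (mul a b) c = beta a (mul b c) &
      forall a b c, beta (mul a b) c = beta b (mul c a)].

(* The free R-module on B x B; B (x)_R B is its quotient by the bilinearity
   relations, and bold IBF_R(B) is the further quotient by the IBF relations.
   [ibf_rel D] says D lies in the R-submodule generated by all these relations,
   i.e. D maps to 0 in bold IBF_R(B). *)
Definition FB := {freeg (B * B) / R}.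
Definition gen (a b : B) : FB := << (a, b) >>.

Inductive ibf_rel : FB -> Prop :=
  | rel_addl a a' b : ibf_rel (gen (a + a') b - gen a b - gen a' b)
  | rel_addr a b b' : ibf_rel (gen a (b + b') - gen a b - gen a b')
  | rel_scalel (r : R) a b : ibf_rel (gen (r *: a) b - r *: gen a b)
  | rel_scaler (r : R) a b : ibf_rel (gen a (r *: b) - r *: gen a b)
  | rel_ibf1 a b c : ibf_rel (gen (mul a b) c - gen a (mul b c))
  | rel_ibf2 a b c : ibf_rel (gen (mul a b) c - gen b (mul c a))
  | rel_zero : ibf_rel 0
  | rel_add D E : ibf_rel D -> ibf_rel E -> ibf_rel (D + E)
  | rel_scale (r : R) D : ibf_rel D -> ibf_rel (r *: D).

Definition beta_lift (beta : B -> B -> R) (D : FB) : R :=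
  fglift (fun p : B * B => (beta p.1 p.2 : R^o)) D.

(* IBF-principle: beta \in IBF_R(B) and the induced map bold IBF_R(B) -> R is
   an R-module isomorphism: it is well defined and injective on the quotient
   (its kernel on the free module is exactly the relation submodule) and it is
   surjective (R-linearity is automatic for a map induced from fglift). *)
Definition IBF_principle (beta : B -> B -> R) : Prop :=
  [/\ is_IBF beta,
      forall D : FB, beta_lift beta D = 0 <-> ibf_rel D &
      forall r : R, exists D : FB, beta_lift beta D = r].

End NonAssoc.

From HB Require Import structures.
From mathcomp Require Import all_boot all_order all_algebra.
From mathcomp.multinomials Require Import freeg.
Import GRing.Theory.
Local Open Scope ring_scope.
Set Implicit Arguments.
Unset Strict Implicit.
Unset Printing Implicit Defensive.

(* Because pi vanishes on ac(B), beta0(a, b) = pi(ab) turns associators and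
   commutators into the two IBF identities.  Conversely, modulo the IBF
   relations (a, b) ~ (ab, 1), and (x, 1) ~ 0 whenever x is an associator
   (by the first identity with third argument 1) or a commutator (by the second);
   writing ab = pi(ab) b0 + (an element of ac(B)) gives (a, b) ~ beta0(a, b) (b0, 1).
   Hence every D in the free module is congruent to beta_lift beta0 D times
   (b0, 1), which is the isomorphism; the statements about AC(B) are those about
   pi, since beta0(b, 1) = pi(b). *)

Section FreegLinear.
Context (R : nzRingType) (K : choiceType) (M : lmodType R) (f : K -> M).

Lemma freegUZ (c k : R) (x : K) : c *: << k *g x >> = << c * k *g x >> :> {freeg K / R}.
Proof. by apply/eqP/freeg_eqP => y; rewrite coeffZ !coeffU mulrA. Qed.

HB.instance Definition _ :=
  GRing.isZmodMorphism.Build {freeg K / R} M (fglift f) (lift_is_additive f).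

Lemma fglift_is_scalable : scalable (fglift f).
Proof.
move=> c D; elim/freeg_ind_dom0: D => [|k x D _ _ IHD].
  (* [freeg_ind_dom0] states its base case with a zero that [scaler0] only
     matches once it is retyped in [{freeg K / R}]. *)
  by rewrite -[c *: 0]/(c *: (0 : {freeg K / R})) !(scaler0, raddf0).
by rewrite scalerDr !raddfD /= IHD freegUZ !liftU scalerA.
Qed.

HB.instance Definition _ :=
  GRing.isScalable.Build R {freeg K / R} M *:%R (fglift f) fglift_is_scalable.

End FreegLinear.

Section EqMod.
Context (V : zmodType) (P : V -> Prop).
Hypotheses (P0 : P 0) (PD : forall x y, P x -> P y -> P (x + y))
  (PN : forall x, P x -> P (- x)).

Definition eqmod (x y : V) : Prop := P (x - y).

Lemma eqmod_refl x : eqmod x x.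
Proof. by rewrite /eqmod subrr. Qed.

Lemma eqmod_sym x y : eqmod x y -> eqmod y x.
Proof. by move=> /PN; rewrite /eqmod opprB. Qed.

Lemma eqmod_trans y x z : eqmod x y -> eqmod y z -> eqmod x z.
Proof. by move=> Pxy Pyz; have := PD Pxy Pyz; rewrite /eqmod addrA subrK. Qed.

Lemma eqmodD x x' y y' : eqmod x x' -> eqmod y y' -> eqmod (x + y) (x' + y').
Proof. by move=> Px Py; have := PD Px Py; rewrite /eqmod opprD addrACA. Qed.

Lemma eqmodN x y : eqmod x y -> eqmod (- x) (- y).
Proof. by move=> /PN; rewrite /eqmod opprD. Qed.

Lemma eqmod0 x : eqmod x 0 -> P x.
Proof. by rewrite /eqmod subr0. Qed.

End EqMod.

Arguments eqmod {V} P x y.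
Arguments eqmod_refl {V P} P0 x.
Arguments eqmod_sym {V P} PN {x y}.
Arguments eqmod_trans {V P} PD y {x z}.
Arguments eqmodD {V P} PD {x x' y y'}.
Arguments eqmodN {V P} PN {x y}.

Section UnitalAlgebra.
Context (R : comNzRingType) (B : lmodType R) (mul : B -> B -> B) (one : B).
Hypothesis alg : unital_algebra mul one.

Lemma mulZDl r a a' b : mul (r *: a + a') b = r *: mul a b + mul a' b.
Proof. by case: alg. Qed.

Lemma mulZDr r a b b' : mul a (r *: b + b') = r *: mul a b + mul a b'.
Proof. by case: alg. Qed.

Lemma mul1x b : mul one b = b.
Proof. by case: alg. Qed.

Lemma mulx1 b : mul b one = b.
Proof. by case: alg. Qed.

Lemma mul0x b : mul 0 b = 0.
Proof. by have := mulZDl (-1) one one b; rewrite scaleN1r addNr scaleN1r addNr. Qed.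

Lemma mulx0 b : mul b 0 = 0.
Proof. by have := mulZDr (-1) b one one; rewrite scaleN1r addNr scaleN1r addNr. Qed.

Lemma mulZx r a b : mul (r *: a) b = r *: mul a b.
Proof. by rewrite -[r *: a]addr0 mulZDl mul0x addr0. Qed.

Lemma mulxZ r a b : mul a (r *: b) = r *: mul a b.
Proof. by rewrite -[r *: b]addr0 mulZDr mulx0 addr0. Qed.

Notation ac := (in_ac mul).

Lemma in_acZ r x : ac x -> ac (r *: x).
Proof.
elim=> {x} [a b c|a b||x y _ ACx _ ACy|x _ ACx].
- by rewrite /associator scalerBr -!mulZx; apply: ac_associator.
- by rewrite /commutator scalerBr -mulZx -mulxZ; apply: ac_commutator.
- by rewrite scaler0; apply: ac_zero.
- by rewrite scalerDr; apply: ac_add.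
- by rewrite scalerN; apply: ac_opp.
Qed.

Lemma in_acB x y : ac x -> ac y -> ac (x - y).
Proof. by move=> ACx ACy; apply/ac_add/ac_opp. Qed.

End UnitalAlgebra.

Section IBFForms.
Context (R : comNzRingType) (B : lmodType R) (mul : B -> B -> B) (beta : B -> B -> R).
Hypothesis beta_IBF : is_IBF mul beta.

Lemma beta_lift_gen a b : beta_lift beta (gen a b) = beta a b.
Proof. by rewrite /beta_lift liftU /GRing.scale /= mul1r. Qed.

Lemma beta_liftD D1 D2 : beta_lift beta (D1 + D2) = beta_lift beta D1 + beta_lift beta D2.
Proof. by rewrite /beta_lift raddfD. Qed.

Lemma beta_liftB D1 D2 : beta_lift beta (D1 - D2) = beta_lift beta D1 - beta_lift beta D2.
Proof. by rewrite /beta_lift raddfB. Qed.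

Lemma beta_liftZ r D : beta_lift beta (r *: D) = r * beta_lift beta D.
Proof. by rewrite /beta_lift linearZ. Qed.

Lemma beta_lift_rel D : ibf_rel mul D -> beta_lift beta D = 0.
Proof.
have [linl linr ibf1 ibf2] := beta_IBF.
have addl a a' b : beta (a + a') b = beta a b + beta a' b.
  by rewrite -{1}[a]scale1r linl mul1r.
have addr a b b' : beta a (b + b') = beta a b + beta a b'.
  by rewrite -{1}[b]scale1r linr mul1r.
have scalel r a b : beta (r *: a) b = r * beta a b.
  have beta0l : beta 0 b = 0.
    by have := linl (-1) a a b; rewrite scaleN1r addNr mulN1r addNr.
  by rewrite -[r *: a]addr0 linl beta0l addr0.
have scaler r a b : beta a (r *: b) = r * beta a b.
  have beta0r : beta a 0 = 0.
    by have := linr (-1) a b b; rewrite scaleN1r addNr mulN1r addNr.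
  by rewrite -[r *: b]addr0 linr beta0r addr0.
elim=> {D} [a a' b|a b b'|r a b|r a b|a b c|a b c||D E _ LD _ LE|r D _ LD];
  rewrite ?beta_liftB ?beta_liftD ?beta_liftZ ?beta_lift_gen.
- by rewrite addl addrAC addrK subrr.
- by rewrite addr addrAC addrK subrr.
- by rewrite scalel subrr.
- by rewrite scaler subrr.
- by rewrite ibf1 subrr.
- by rewrite ibf2 subrr.
- by rewrite /beta_lift raddf0.
- by rewrite LD LE addr0.
- by rewrite LD mulr0.
Qed.

End IBFForms.

Section IBFPrinciple.
Context (R : comNzRingType) (B : lmodType R) (mul : B -> B -> B) (one : B).
Context (b0 : B) (pi : B -> R).
Hypothesis alg : unital_algebra mul one.
Hypothesis b0_free_mod_ac : forall r : R, in_ac mul (r *: b0) -> r = 0.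
Hypothesis pi_spec : forall b : B, in_ac mul (b - pi b *: b0).

Notation ac := (in_ac mul).
Notation beta0 := (fun a b : B => pi (mul a b)).

Lemma pi_eq r x : ac (x - r *: b0) -> pi x = r.
Proof.
move=> ACx; apply/esym/eqP; rewrite -subr_eq0; apply/eqP/b0_free_mod_ac.
by have := in_acB (pi_spec x) ACx; rewrite opprB addrC addrA subrK -scalerBl.
Qed.

Lemma pi_eq0 x : pi x = 0 -> ac x.
Proof. by move=> pix0; have := pi_spec x; rewrite pix0 scale0r subr0. Qed.

Lemma pi_congr x y : ac (x - y) -> pi x = pi y.
Proof.
by move=> ACxy; apply: pi_eq; have := ac_add ACxy (pi_spec y); rewrite addrA subrK.
Qed.

Lemma pi_scale_b0 r : pi (r *: b0) = r.
Proof. by apply: pi_eq; rewrite subrr; apply: ac_zero. Qed.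

Lemma pi_linear r a a' : pi (r *: a + a') = r * pi a + pi a'.
Proof.
apply: pi_eq; rewrite scalerDl -scalerA opprD addrACA -scalerBr.
by apply: ac_add; [apply: (in_acZ alg) |]; apply: pi_spec.
Qed.

Lemma beta0_IBF : is_IBF mul beta0.
Proof.
split=> [r a a' b|r a b b'|a b c|a b c] /=.
- by rewrite (mulZDl alg) pi_linear.
- by rewrite (mulZDr alg) pi_linear.
- exact/pi_congr/ac_associator.
- have assoc_bca : pi (mul (mul b c) a) = pi (mul b (mul c a)).
    exact/pi_congr/ac_associator.
  have comm_a_bc : pi (mul a (mul b c)) = pi (mul (mul b c) a).
    exact/pi_congr/ac_commutator.
  by rewrite -assoc_bca -comm_a_bc; apply/pi_congr/ac_associator.
Qed.

Notation rel := (ibf_rel mul).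

Let rel_opp D : rel D -> rel (- D).
Proof. by move=> relD; rewrite -scaleN1r; apply: rel_scale. Qed.

Let relZ r D E : eqmod rel D E -> eqmod rel (r *: D) (r *: E).
Proof. by rewrite /eqmod -scalerBr; apply: rel_scale. Qed.

Local Notation rel_refl := (eqmod_refl (rel_zero mul)).
Local Notation rel_sym := (eqmod_sym rel_opp).
Local Notation rel_trans := (eqmod_trans (@rel_add _ _ mul)).
Local Notation relD := (eqmodD (@rel_add _ _ mul)).
Local Notation relN := (eqmodN rel_opp).

Lemma genDl u v w : eqmod rel (gen (u + v) w) (gen u w + gen v w).
Proof. by have := rel_addl mul u v w; rewrite /eqmod opprD addrA. Qed.

Lemma genNl v w : eqmod rel (gen (- v) w) (- gen v w).
Proof. by have := rel_scalel mul (-1) v w; rewrite !scaleN1r. Qed.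

Lemma genBl u v w : eqmod rel (gen (u - v) w) (gen u w - gen v w).
Proof. exact: rel_trans _ (genDl _ _ _) (relD (rel_refl _) (genNl _ _)). Qed.

Lemma genZl r v w : eqmod rel (gen (r *: v) w) (r *: gen v w).
Proof. exact: rel_scalel. Qed.

Lemma gen_mul1 a b : eqmod rel (gen a b) (gen (mul a b) one).
Proof. by apply: rel_sym; have := rel_ibf1 mul a b one; rewrite (mulx1 alg). Qed.

Lemma gen_ac x : ac x -> eqmod rel (gen x one) 0.
Proof.
elim=> {x} [a b c|a b||x y _ relx _ rely|x _ relx].
- rewrite -(subrr (gen (mul (mul a b) c) one)).
  apply: rel_trans _ (genBl _ _ _) (relD (rel_refl _) (relN _)).
  apply: rel_trans _ (rel_sym (gen_mul1 a (mul b c))) _.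
  apply: rel_trans _ (rel_sym (rel_ibf1 mul a b c)) _.
  exact: gen_mul1.
- rewrite -(subrr (gen (mul b a) one)).
  apply: rel_trans _ (genBl _ _ _) (relD _ (rel_refl _)).
  apply: rel_trans _ (gen_mul1 b a).
  by have := rel_ibf2 mul a b one; rewrite (mul1x alg).
- by have := rel_scalel mul 0 0 one; rewrite scaler0 scale0r /eqmod !subr0.
- by rewrite -(addr0 0); apply: rel_trans _ (genDl _ _ _) (relD relx rely).
- by rewrite -oppr0; apply: rel_trans _ (genNl _ _) (relN relx).
Qed.

Lemma gen_eqmod_b0 a b : eqmod rel (gen a b) (pi (mul a b) *: gen b0 one).
Proof.
apply: rel_trans _ (gen_mul1 a b) _.
set y := mul a b.
have y_decomp : y = pi y *: b0 + (y - pi y *: b0) by rewrite addrC subrK.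
rewrite {1}y_decomp -[X in eqmod _ _ X]addr0.
exact: rel_trans _ (genDl _ _ _) (relD (genZl _ _ _) (gen_ac (pi_spec y))).
Qed.

Lemma freeg_eqmod_b0 D : eqmod rel D (beta_lift beta0 D *: gen b0 one).
Proof.
elim/freeg_ind_dom0: D => [|k [a b] D _ _ IHD].
  by rewrite /beta_lift raddf0 scale0r; apply: rel_refl.
have -> : << k *g (a, b) >> = k *: gen a b by rewrite /gen freegUZ mulr1.
rewrite beta_liftD beta_liftZ beta_lift_gen scalerDl -scalerA.
exact: relD (relZ k (gen_eqmod_b0 a b)) IHD.
Qed.

Lemma IBF_principle_beta0 : IBF_principle mul beta0.
Proof.
split=> [|D|r]; first exact: beta0_IBF.
  split; last exact: (beta_lift_rel beta0_IBF).
  by move=> lift0; have := freeg_eqmod_b0 D; rewrite lift0 scale0r; apply: eqmod0.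
by exists (gen (r *: b0) one); rewrite beta_lift_gen (mulx1 alg) pi_scale_b0.
Qed.

End IBFPrinciple.

Theorem corollary6p9 (R : comNzRingType) (B : lmodType R) (mul : B -> B -> B) (one : B)
  (b0 : B) (pi : B -> R) :
  unital_algebra mul one ->
  (* B = R b0 + ac(B) *)
  (forall b : B, exists (r : R) (x : B), in_ac mul x /\ b = r *: b0 + x) ->
  (* the sum is direct: R b0 meets ac(B) trivially *)
  (forall r : R, in_ac mul (r *: b0) -> r *: b0 = 0) ->
  (* R b0 is free with basis {b0} *)
  (forall r : R, r *: b0 = 0 -> r = 0) ->
  (* pi is defined by b = pi(b) b0 + b_ac with b_ac in ac(B) *)
  (forall b : B, in_ac mul (b - pi b *: b0)) ->
  let beta0 := fun a b : B => pi (mul a b) in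
  [/\ is_IBF mul beta0,
      IBF_principle mul beta0 &
      [/\
      (* tilde beta0 : AC(B) = B/ac(B) -> R, bar b |-> beta0(b,1), is well defined, *)
      (forall b b' : B, in_ac mul (b - b') -> beta0 b one = beta0 b' one),
      (* R-linear, *)
      (forall (r : R) (b b' : B), beta0 (r *: b + b') one = r * beta0 b one + beta0 b' one),
      (* injective on AC(B) (its kernel is ac(B)) *)
      (forall b : B, beta0 b one = 0 -> in_ac mul b) &
      (* and surjective *)
      (forall r : R, exists b : B, beta0 b one = r)]].
Proof.
(* The decomposition B = R b0 + ac(B) is already witnessed by pi. *)
move=> alg _ direct free pi_spec beta0.
have b0_free_mod_ac r : in_ac mul (r *: b0) -> r = 0 by move/direct/free.
have beta0_one b : beta0 b one = pi b by rewrite /beta0 (mulx1 alg).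
split; first exact: beta0_IBF alg b0_free_mod_ac pi_spec.
  exact: IBF_principle_beta0 alg b0_free_mod_ac pi_spec.
split=> [b b'|r b b'|b|r]; rewrite ?beta0_one.
- exact: (pi_congr b0_free_mod_ac pi_spec).
- exact: (pi_linear alg b0_free_mod_ac pi_spec).
- exact: (pi_eq0 pi_spec).
- by exists (r *: b0); rewrite beta0_one (pi_scale_b0 b0_free_mod_ac pi_spec).
Qed.
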